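(* Let $\mathcal{A}=\{1,\dots,N\}$, $\boldsymbol{\lambda}\in\mathbb{R}_+^N$, $\boldsymbol{\delta}\in\mathbb{R}^N$ with $\delta_i>0$, $B\in\mathbb{R}_+^{N\times N}$ with zero diagonal whose associated directed graph is weakly connected but not strongly connected, $\mathcal{S}\subset\mathbb{R}_+^N$ convex, and $q_i:\mathbb{R}_+\to(0,1]$ decreasing, strictly convex, continuously differentiable. For $\mathbf{s}\in\mathcal{S}$ and $\epsilon\ge0$ define $$\mathbf{g}^{\mathbf{s}}(\epsilon,\mathbf{p})=(\mathbf{1}-\mathbf{p})\circ(\boldsymbol{\lambda}+\epsilon\mathbf{1}+B\mathbf{p})-\mathbf{q}(\mathbf{s})^{-1}\circ\boldsymbol{\delta}\circ\mathbf{p},$$ so that $$\partial_{\mathbf{p}}\mathbf{g}^{\mathbf{s}}(\epsilon,\mathbf{p})=\mathrm{diag}(\mathbf{1}-\mathbf{p})B-\mathrm{diag}\big(\mathbf{q}(\mathbf{s})^{-1}\circ\boldsymbol{\delta}+\boldsymbol{\lambda}+\epsilon\mathbf{1}+B\mathbf{p}\big).$$ For $\epsilon>0$ let $\bar{\mathbf{p}}^\epsilon(\mathbf{s})>\mathbf{0}$ be the unique strictly positive solution of $\mathbf{g}^{\mathbf{s}}(\epsilon,\mathbf{p})=\mathbf{0}$. Then for every $\epsilon>0$, the matrix $-\partial_{\mathbf{p}}\mathbf{g}^{\mathbf{s}}(\epsilon,\bar{\mathbf{p}}^\epsilon(\mathbf{s}))$ is a nonsingular M-matrix.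
   Context: $\circ$ is the element-wise product; $\mathbf{q}(\mathbf{s})=(q_i(s_i))_i$, $\mathbf{q}(\mathbf{s})^{-1}$ its element-wise inverse; $\mathrm{diag}(\mathbf{x})$ is the diagonal matrix with diagonal $\mathbf{x}$. A Z-matrix is a square matrix with nonpositive off-diagonal and nonnegative diagonal entries; an M-matrix is a Z-matrix of the form $sI-C$ with $C$ entrywise nonnegative and $s\ge\rho(C)$ (spectral radius). The associated graph has an edge $(j,i)$ iff $b_{i,j}>0$. *)

From HB Require Import structures.
From mathcomp Require Import all_boot all_order all_algebra.
From mathcomp Require Import all_classical all_reals all_analysis.
From mathcomp Require Import complex.
Set Implicit Arguments. Unset Strict Implicit. Unset Printing Implicit Defensive.
Import Order.TTheory GRing.Theory Num.Theory.
Local Open Scope ring_scope.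
Local Open Scope classical_set_scope.

Section Defs.
Variable R : realType.

Definition Zmatrix (n : nat) (A : 'M[R]_n) : Prop :=
  (forall i j : 'I_n, i != j -> A i j <= 0) /\ (forall i : 'I_n, 0 <= A i i).

Definition spectral_radius_le (n : nat) (C : 'M[R]_n) (s : R) : Prop :=
  forall mu : R[i], eigenvalue (map_mx (fun x : R => (x%:C)%C) C) mu ->
    `|mu| <= (s%:C)%C.

Definition Mmatrix (n : nat) (A : 'M[R]_n) : Prop :=
  Zmatrix A /\
  exists (s : R) (C : 'M[R]_n),
    (forall i j, 0 <= C i j) /\ A = s%:M - C /\ spectral_radius_le C s.

Definition nonsingular_Mmatrix (n : nat) (A : 'M[R]_n) : Prop :=
  Mmatrix A /\ A \in unitmx.

Definition graph_edge (n : nat) (B : 'M[R]_n) : rel 'I_n :=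
  fun j i => 0 < B i j.

Definition strongly_connected (n : nat) (B : 'M[R]_n) : Prop :=
  forall u v : 'I_n, connect (graph_edge B) u v.

Definition weakly_connected (n : nat) (B : 'M[R]_n) : Prop :=
  forall u v : 'I_n,
    connect (fun a b => graph_edge B a b || graph_edge B b a) u v.

Definition gs (n : nat) (lam del : 'I_n -> R) (B : 'M[R]_n)
  (q : 'I_n -> R -> R) (s : 'I_n -> R) (eps : R) (p : 'I_n -> R) : 'I_n -> R :=
  fun i => (1 - p i) * (lam i + eps + \sum_(j < n) B i j * p j)
           - (q i (s i))^-1 * del i * p i.

Definition dgs (n : nat) (lam del : 'I_n -> R) (B : 'M[R]_n)
  (q : 'I_n -> R -> R) (s : 'I_n -> R) (eps : R) (p : 'I_n -> R) : 'M[R]_n :=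
  \matrix_(i, j) ((1 - p i) * B i j
     - (i == j)%:R * ((q i (s i))^-1 * del i + lam i + eps
                      + \sum_(k < n) B i k * p k)).

End Defs.

From HB Require Import structures.
From mathcomp Require Import all_boot all_order all_algebra.
From mathcomp Require Import all_classical all_reals all_analysis.
From mathcomp Require Import complex.
From mathcomp Require Import lra.
Import Order.TTheory GRing.Theory Num.Theory numFieldNormedType.Exports.
Local Open Scope ring_scope.

(* At the equilibrium pbar, the matrix A := - dgs pbar has nonpositive
   off-diagonal entries (each pbar_i < 1) and the vector
   A pbar = lam + eps + pbar o (B pbar) is positive.  Such a Z-matrix is a
   nonsingular M-matrix: writing A = s I - C with C >= 0 we get C pbar < s pbar,
   and comparing an eigenvector x of C at an index maximising |x_i| / pbar_i
   shows that every eigenvalue of C has modulus < s. *)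

Lemma eigenvalue_det (F : fieldType) n (A : 'M[F]_n) a :
  eigenvalue A a = (\det (a%:M - A) == 0).
Proof.
apply/eigenvalueP/det0P => [[v Av v0] | [v v0 Av]]; exists v => //.
  by rewrite mulmxBr Av mul_mx_scalar subrr.
by apply/eqP; rewrite -mul_mx_scalar eq_sym -subr_eq0 -mulmxBr Av.
Qed.

Lemma eigenvalue_trmx (F : fieldType) n (A : 'M[F]_n) a :
  eigenvalue A^T a = eigenvalue A a.
Proof. by rewrite !eigenvalue_det -det_tr linearB /= tr_scalar_mx trmxK. Qed.

Lemma eigenvalue_colP (F : fieldType) n (A : 'M[F]_n) a :
  reflect (exists2 x : 'cV_n, A *m x = a *: x & x != 0) (eigenvalue A a).
Proof.
rewrite -eigenvalue_trmx; apply: (iffP eigenvalueP) => -[v Av v0]; exists v^T.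
- by rewrite -[A]trmxK -trmx_mul Av linearZ.
- by rewrite trmx_eq0.
- by rewrite -trmx_mul Av linearZ.
- by rewrite trmx_eq0.
Qed.

Section NonnegativeMatrix.
Context {R : rcfType} {n : nat} {C : 'M[R]_n} {p : 'cV[R]_n} {s : R}.
Hypotheses (C_ge0 : forall i j, 0 <= C i j) (p_gt0 : forall i, 0 < p i 0)
  (Cp_lt : forall i, (C *m p) i 0 < s * p i 0).

Lemma subeigenvector_lt (y : 'cV[R]_n) (r : R) :
  (forall i, 0 <= y i 0) -> y != 0 -> (forall i, r * y i 0 <= (C *m y) i 0) ->
  r < s.
Proof.
move=> y_ge0 y_neq0 Cy_ge.
have [k yk_neq0] : exists k, y k 0 != 0.
  apply/existsP; apply: contraNT y_neq0; rewrite negb_exists => /forallP y0.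
  by apply/eqP/matrixP => i j; rewrite ord1 mxE; apply/eqP/negbNE.
pose ratio j := y j 0 / p j 0.
pose i := Order.arg_max k xpredT ratio.
have ratio_le j : ratio j <= ratio i.
  by rewrite /i; case: arg_maxP => // i0 _; apply.
have ratio_i_gt0 : 0 < ratio i.
  apply: lt_le_trans (ratio_le k); rewrite divr_gt0 //.
  by rewrite lt_def yk_neq0 y_ge0.
have yi_gt0 : 0 < y i 0 by move: ratio_i_gt0; rewrite pmulr_lgt0 // invr_gt0.
rewrite -(ltr_pM2r yi_gt0); apply: le_lt_trans (Cy_ge i) _.
have -> : s * y i 0 = ratio i * (s * p i 0).
  by rewrite /ratio mulrCA divfK ?gt_eqF.
apply: (le_lt_trans (_ : _ <= ratio i * (C *m p) i 0)); last first.
  by rewrite ltr_pM2l.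
rewrite !mxE mulr_sumr; apply: ler_sum => j _; rewrite mulrCA ler_wpM2l //.
by have := ratio_le j; rewrite /ratio ler_pdivrMr.
Qed.

Lemma RRe_norm (z : R[i]) : `|z| = (complex.Re `|z|)%:C%C.
Proof. by rewrite RRe_real ?normr_real. Qed.

Lemma eigenvalue_norm_lt (mu : R[i]) :
  eigenvalue (map_mx (real_complex R) C) mu -> `|mu| < s%:C%C.
Proof.
case/eigenvalue_colP => x Cx x_neq0.
pose y := map_mx (fun z => complex.Re `|z|) x.
rewrite RRe_norm ltcR; apply: (subeigenvector_lt y) => [i | | i].
- by rewrite mxE -(@ler0c R) -RRe_norm.
- apply: contraNneq x_neq0 => y0; apply/eqP/matrixP => i j.
  have /(congr1 (real_complex R)) := congr1 (fun M : 'cV_n => M i j) y0.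
  by rewrite !mxE -RRe_norm => /eqP; rewrite normr_eq0 => /eqP.
- rewrite -lecR rmorphM /= mxE -!RRe_norm -normrM.
  have -> : mu * x i 0 = \sum_j (C i j)%:C%C * x j 0.
    have := congr1 (fun M : 'cV_n => M i 0) Cx; rewrite !mxE => <-.
    by apply: eq_bigr => j _; rewrite mxE.
  apply: le_trans (ler_norm_sum _ _ _) _; rewrite mxE rmorph_sum /=.
  apply: ler_sum => j _; rewrite normrM mxE rmorphM /= -RRe_norm.
  by rewrite ger0_norm ?ler0c.
Qed.

End NonnegativeMatrix.

Lemma nonsingular_Mmatrix_pos_vector {R : realType} {n : nat} {A : 'M[R]_n}
    (p : 'cV[R]_n) :
  (forall i j, i != j -> A i j <= 0) -> (forall i, 0 < p i 0) ->
  (forall i, 0 < (A *m p) i 0) -> nonsingular_Mmatrix A.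
Proof.
move=> A_offdiag p_gt0 Ap_gt0.
have A_diag_gt0 i : 0 < A i i.
  have offdiag_le0 : \sum_(j | j != i) A i j * p j 0 <= 0.
    by apply: sumr_le0 => j ji; rewrite mulr_le0_ge0 ?A_offdiag 1?eq_sym // ltW.
  have := Ap_gt0 i; rewrite mxE (bigD1 i) //= => Ap_i.
  by rewrite -(pmulr_lgt0 _ (p_gt0 i)); lra.
pose s := \sum_i A i i.
have s_ge_diag i : A i i <= s.
  by rewrite /s (bigD1 i) //= lerDl sumr_ge0 // => j _; rewrite ltW.
pose C := s%:M - A.
have C_ge0 i j : 0 <= C i j.
  rewrite !mxE; case: eqVneq => [<- | ij] /=.
    by rewrite mulr1n subr_ge0.
  by rewrite mulr0n sub0r oppr_ge0 A_offdiag.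
have Cp_lt i : (C *m p) i 0 < s * p i 0.
  by have := Ap_gt0 i; rewrite mulmxBl mul_scalar_mx !mxE; lra.
have A_eq : A = s%:M - C by rewrite /C subKr.
have C_spec := eigenvalue_norm_lt C_ge0 p_gt0 Cp_lt.
split; first split.
- by split=> [i j /A_offdiag | i] //; apply: ltW.
- by exists s, C; do 2!split=> //; move=> mu /C_spec /ltW.
rewrite unitmxE unitfE; apply/negP => /eqP detA0.
have : eigenvalue C s by rewrite eigenvalue_det -A_eq detA0.
rewrite -(eigenvalue_map (real_complex R)) => /C_spec.
by rewrite ger0_norm ?ltxx // ler0c sumr_ge0 // => i _; apply: ltW.
Qed.

Section Equilibrium.
Context {R : realType} {n : nat} {lam del : 'I_n -> R} {B : 'M[R]_n}
  {q : 'I_n -> R -> R} {s : 'I_n -> R} {eps : R} {p : 'I_n -> R}.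
Hypotheses (lam_ge0 : forall i, 0 <= lam i) (del_gt0 : forall i, 0 < del i)
  (B_ge0 : forall i j, 0 <= B i j) (q_gt0 : forall i, 0 < q i (s i))
  (eps_gt0 : 0 < eps) (p_gt0 : forall i, 0 < p i)
  (p_root : gs lam del B q s eps p = (fun _ => 0)).

Lemma gs_root_lt1 i : p i < 1.
Proof.
have rate_gt0 : 0 < lam i + eps + \sum_j B i j * p j.
  have : 0 <= \sum_j B i j * p j.
    by rewrite sumr_ge0 // => j _; rewrite mulr_ge0 // ltW.
  by move: (lam_ge0 i) eps_gt0; lra.
have loss_gt0 : 0 < (q i (s i))^-1 * del i * p i.
  by rewrite !mulr_gt0 ?invr_gt0.
have := congr1 (fun g => g i) p_root; rewrite /gs => root_i.
by rewrite -subr_gt0 -(pmulr_lgt0 _ rate_gt0); lra.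
Qed.

Lemma dgs_root_offdiag i j : i != j -> (- dgs lam del B q s eps p) i j <= 0.
Proof.
move=> /negbTE ij; rewrite !mxE ij mul0r subr0 oppr_le0.
by rewrite mulr_ge0 // subr_ge0 ltW ?gs_root_lt1.
Qed.

Lemma dgs_root_mul i :
  (- dgs lam del B q s eps p *m \col_j p j) i 0
  = lam i + eps + p i * \sum_j B i j * p j.
Proof.
have := congr1 (fun g => g i) p_root; rewrite /gs => root_i.
rewrite mxE; under eq_bigr do rewrite !mxE mulNr mulrBl.
rewrite sumrN sumrB [X in _ - X](bigD1 i) //= eqxx mul1r.
rewrite [X in _ * p i + X]big1 => [|j ji]; last first.
  by rewrite eq_sym (negbTE ji) !mul0r.
under eq_bigr do rewrite -mulrA.
by rewrite -mulr_sumr; lra.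
Qed.
End Equilibrium.

Local Open Scope classical_set_scope.

Theorem lemma2 (R : realType) (N : nat)
  (lam del : 'I_N -> R) (B : 'M[R]_N) (S : set ('I_N -> R))
  (q : 'I_N -> R -> R)
  (hlam : forall i, 0 <= lam i)
  (hdel : forall i, 0 < del i)
  (hB : forall i j, 0 <= B i j)
  (hBdiag : forall i, B i i = 0)
  (hweak : weakly_connected B)
  (hnstrong : ~ strongly_connected B)
  (hSpos : forall x, S x -> forall i, 0 <= x i)
  (hSconv : forall x y (t : R), S x -> S y -> 0 <= t -> t <= 1 ->
              S (fun i => t * x i + (1 - t) * y i))
  (hqrange : forall i (x : R), 0 <= x -> 0 < q i x /\ q i x <= 1)
  (hqdecr : forall i (x y : R), 0 <= x -> x < y -> q i y < q i x)
  (hqconv : forall i (x y t : R), 0 <= x -> 0 <= y -> x != y -> 0 < t -> t < 1 ->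
              q i (t * x + (1 - t) * y) < t * q i x + (1 - t) * q i y)
  (hqdiff : forall i (x : R), 0 <= x -> derivable (q i) x 1)
  (hqC1 : forall i, {within [set x : R | 0 <= x], continuous ((q i)^`() : R -> R)})
  (s : 'I_N -> R) (hs : S s)
  (eps : R) (heps : 0 < eps)
  (pbar : 'I_N -> R)
  (hpos : forall i, 0 < pbar i)
  (hsol : gs lam del B q s eps pbar = (fun _ => 0))
  (huniq : forall p : 'I_N -> R, (forall i, 0 < p i) ->
             gs lam del B q s eps p = (fun _ => 0) -> p = pbar) :
  nonsingular_Mmatrix (- dgs lam del B q s eps pbar).
Proof.
have q_gt0 i : 0 < q i (s i) by case: (hqrange i (s i) (hSpos _ hs i)).
apply: (nonsingular_Mmatrix_pos_vector (\col_j pbar j)) => [i j | i | i].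
- exact: (dgs_root_offdiag hlam hdel hB q_gt0 heps hpos hsol).
- by rewrite mxE.
rewrite (dgs_root_mul hsol).
have : 0 <= pbar i * \sum_j B i j * pbar j.
  by rewrite mulr_ge0 ?sumr_ge0 // => [|j _]; rewrite ?mulr_ge0 // ltW.
by move: (hlam i) heps; lra.
Qed.
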